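(* Let $0<\alpha<1/2$. For every real $2\times 2$ matrix $M$ we have $\sigma_2(D_1M)=\sigma_2(D_2M)$. Moreover $\sigma_2(D_1D_2D_2)=\sigma_2(D_2D_2D_2)>1$, and more generally $\sigma_2(D_1D_2^m)\ge\sigma_2(D_2^3)>1$ for every $m=2+3k$ with $k\ge 1$ an integer.
   Context: For $0<\alpha<1$ let $D_1=\begin{pmatrix}0&1\\ 2(1-\alpha)&2\alpha\end{pmatrix}$ and $D_2=\begin{pmatrix}0&1\\ -2(1-\alpha)&-2\alpha\end{pmatrix}$ (these are the derivative matrices of $(x,y)\mapsto(y,\tau(\alpha y+(1-\alpha)x))$, $\tau$ the symmetric tent map, on the regions $\alpha y+(1-\alpha)x<1/2$ and $>1/2$ respectively). For a real $2\times2$ matrix $B$, $\sigma_2(B)$ denotes its smaller singular value, i.e. the square root of the smaller eigenvalue of $B^TB$. *)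

From HB Require Import structures.
From mathcomp Require Import all_boot all_order all_algebra.
Set Implicit Arguments. Unset Strict Implicit. Unset Printing Implicit Defensive.
Import Order.TTheory GRing.Theory Num.Theory.
Local Open Scope ring_scope.

Definition D1 (R : rcfType) (a : R) : 'M[R]_2 :=
  \matrix_(i < 2, j < 2)
    if (i == 0 :> nat) then (if (j == 0 :> nat) then 0 else 1)
    else (if (j == 0 :> nat) then 2 * (1 - a) else 2 * a).

Definition D2 (R : rcfType) (a : R) : 'M[R]_2 :=
  \matrix_(i < 2, j < 2)
    if (i == 0 :> nat) then (if (j == 0 :> nat) then 0 else 1)
    else (if (j == 0 :> nat) then - (2 * (1 - a)) else - (2 * a)).

(* Smaller eigenvalue of a 2x2 (symmetric) matrix S: the smaller root of its
   characteristic polynomial X^2 - tr(S) X + det(S). *)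
Definition lambda_min (R : rcfType) (S : 'M[R]_2) : R :=
  (\tr S - Num.sqrt (\tr S ^+ 2 - 4 * \det S)) / 2.

Definition sigma2 (R : rcfType) (B : 'M[R]_2) : R :=
  Num.sqrt (lambda_min (B^T *m B)).

(** The smaller singular value [sigma2 B] is the square root of the largest [t]
    with [t |v|^2 <= |B v|^2] for all [v].  Hence it is unchanged by an
    orthogonal factor on the left, and it is supermultiplicative:
    [sigma2 A * sigma2 B <= sigma2 (A B)].  Since [D2 = J D1] with the
    reflection [J = diag(1, -1)], [D1 M] and [D2 M] have the same [sigma2];
    in particular [sigma2 (D1 D2^(2+3k)) = sigma2 ((D2^3)^(k+1))], which is at
    least [sigma2 (D2^3)] as soon as [sigma2 (D2^3) >= 1].  The last inequality
    [sigma2 (D2^3) > 1] is an explicit polynomial estimate in [u = 1 - 2a]. *)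

From HB Require Import structures.
From mathcomp Require Import all_boot all_order all_algebra.
From mathcomp Require Import ring lra zify.
Import Order.TTheory GRing.Theory Num.Theory.
Set Implicit Arguments.
Unset Strict Implicit.
Unset Printing Implicit Defensive.

Local Open Scope ring_scope.

Section EigMin.
Variable R : rcfType.
Implicit Types p q r t x y : R.

Definition eig_min p q r := (p + r - Num.sqrt ((p - r) ^+ 2 + 4 * q ^+ 2)) / 2.

Definition quad_form p q r x y := p * x ^+ 2 + 2 * q * x * y + r * y ^+ 2.

Lemma eig_min_le_form p q r x y :
  eig_min p q r * (x ^+ 2 + y ^+ 2) <= quad_form p q r x y.
Proof.
rewrite /eig_min /quad_form; set s := Num.sqrt _; set l := (_ - s) / 2.
have s_ge0 : 0 <= s by apply: sqrtr_ge0.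
have sq_s : s ^+ 2 = (p - r) ^+ 2 + 4 * q ^+ 2.
  by rewrite /s sqr_sqrtr // addr_ge0 ?sqr_ge0 // mulr_ge0 ?sqr_ge0.
have pl_ge0 : 0 <= p - l by rewrite /l; nra.
have rl_ge0 : 0 <= r - l by rewrite /l; nra.
have det_l : (p - l) * (r - l) = q ^+ 2 by rewrite /l; nra.
suff : 0 <= (p - l) * x ^+ 2 + 2 * q * x * y + (r - l) * y ^+ 2 by nra.
have [pl0 | pl_neq0] := eqVneq (p - l) 0.
  have -> : q = 0 by nra.
  by rewrite pl0; nra.
have pl_gt0 : 0 < p - l by rewrite lt_neqAle eq_sym pl_neq0.
rewrite -(pmulr_rge0 _ pl_gt0).
(* completing the square *)
have -> : (p - l) * ((p - l) * x ^+ 2 + 2 * q * x * y + (r - l) * y ^+ 2)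
    = ((p - l) * x + q * y) ^+ 2 + ((p - l) * (r - l) - q ^+ 2) * y ^+ 2 by ring.
by rewrite det_l subrr mul0r addr0 sqr_ge0.
Qed.

Lemma sqrt_discr_le p q r t :
  t <= p -> t <= r -> q ^+ 2 <= (p - t) * (r - t) ->
  Num.sqrt ((p - r) ^+ 2 + 4 * q ^+ 2) <= (p - t) + (r - t).
Proof.
move=> tp tr hq; have h0 : 0 <= (p - t) + (r - t) by lra.
rewrite -(ger0_norm h0) -sqrtr_sqr ler_sqrt ?sqr_ge0 //; nra.
Qed.

Lemma le_eig_min p q r t :
  (forall x y, t * (x ^+ 2 + y ^+ 2) <= quad_form p q r x y) -> t <= eig_min p q r.
Proof.
rewrite /quad_form => ht.
have tp : t <= p by have := ht 1 0; rewrite !expr1n !expr0n /=; lra.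
have tr : t <= r by have := ht 0 1; rewrite !expr1n !expr0n /=; lra.
suff hq : q ^+ 2 <= (p - t) * (r - t).
  by have := sqrt_discr_le tp tr hq; rewrite /eig_min; lra.
have [pt0 | pt_neq0] := eqVneq (p - t) 0.
  suff -> : q = 0 by rewrite pt0 expr0n mul0r.
  have := ht (r - t + 1) (- q); nra.
have pt_gt0 : 0 < p - t by rewrite lt_neqAle eq_sym pt_neq0 subr_ge0.
rewrite -subr_ge0 -(pmulr_rge0 _ pt_gt0).
have := ht q (- (p - t)); nra.
Qed.

Lemma lt_eig_min p q r t :
  t < p -> q ^+ 2 < (p - t) * (r - t) -> t < eig_min p q r.
Proof.
move=> tp hq; have tr : t < r by nra.
suff : Num.sqrt ((p - r) ^+ 2 + 4 * q ^+ 2) < (p - t) + (r - t) by rewrite /eig_min; lra.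
have h0 : 0 < (p - t) + (r - t) by lra.
rewrite -(gtr0_norm h0) -sqrtr_sqr ltr_sqrt ?exprn_gt0 //; nra.
Qed.

End EigMin.

Section SmallerSingularValue.
Variable R : rcfType.
Implicit Types (A B C U : 'M[R]_2) (x y t : R).

Lemma sum_ord2 (F : 'I_2 -> R) : \sum_(i < 2) F i = F 0 + F 1.
Proof. by rewrite !big_ord_recl big_ord0 addr0; congr (F _ + F _); apply: val_inj. Qed.

Lemma det_mx2 A : \det A = A 0 0 * A 1 1 - A 0 1 * A 1 0.
Proof.
rewrite (expand_det_row _ 0) sum_ord2 /cofactor !det_mx11 !mxE /=.
have -> : lift (0 : 'I_2) 0 = 1 by apply: val_inj.
have -> : lift (1 : 'I_2) 0 = 0 by apply: val_inj.
by rewrite /= expr0 expr1; ring.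
Qed.

Lemma trace_mx2 A : \tr A = A 0 0 + A 1 1.
Proof. exact: sum_ord2. Qed.

Definition gram_form B x y :=
  (B 0 0 * x + B 0 1 * y) ^+ 2 + (B 1 0 * x + B 1 1 * y) ^+ 2.

Lemma gram_formE B x y :
  gram_form B x y = quad_form (B 0 0 ^+ 2 + B 1 0 ^+ 2)
    (B 0 0 * B 0 1 + B 1 0 * B 1 1) (B 0 1 ^+ 2 + B 1 1 ^+ 2) x y.
Proof. by rewrite /gram_form /quad_form; ring. Qed.

Lemma lambda_min_gram B :
  lambda_min (B^T *m B) = eig_min (B 0 0 ^+ 2 + B 1 0 ^+ 2)
    (B 0 0 * B 0 1 + B 1 0 * B 1 1) (B 0 1 ^+ 2 + B 1 1 ^+ 2).
Proof.
rewrite /lambda_min /eig_min det_mx2 trace_mx2 !mxE !sum_ord2 !mxE.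
by congr ((_ - Num.sqrt _) / 2); ring.
Qed.

Lemma lambda_min_gram_ge0 B : 0 <= lambda_min (B^T *m B).
Proof.
rewrite lambda_min_gram; apply: le_eig_min => x y.
by rewrite mul0r -gram_formE addr_ge0 ?sqr_ge0.
Qed.

Lemma sigma2_ge0 B : 0 <= sigma2 B.
Proof. exact: sqrtr_ge0. Qed.

Lemma sigma2_sqr_le_gram B x y : sigma2 B ^+ 2 * (x ^+ 2 + y ^+ 2) <= gram_form B x y.
Proof.
by rewrite sqr_sqrtr ?lambda_min_gram_ge0 // lambda_min_gram gram_formE eig_min_le_form.
Qed.

Lemma le_sigma2 B t :
  (forall x y, t * (x ^+ 2 + y ^+ 2) <= gram_form B x y) -> Num.sqrt t <= sigma2 B.
Proof.
move=> ht; rewrite ler_sqrt ?lambda_min_gram_ge0 // lambda_min_gram.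
by apply: le_eig_min => x y; rewrite -gram_formE.
Qed.

Lemma sigma2_gt1 B : 1 < lambda_min (B^T *m B) -> 1 < sigma2 B.
Proof. by move=> h; rewrite -sqrtr1 ltr_sqrt // (lt_trans ltr01 h). Qed.

Lemma gram_form_mul A B x y :
  gram_form (A *m B) x y = gram_form A (B 0 0 * x + B 0 1 * y) (B 1 0 * x + B 1 1 * y).
Proof. by rewrite /gram_form !mxE !sum_ord2; ring. Qed.

Lemma sigma2_mul_le A B : sigma2 A * sigma2 B <= sigma2 (A *m B).
Proof.
rewrite -[_ * _]ger0_norm ?mulr_ge0 ?sigma2_ge0 // -sqrtr_sqr.
apply: le_sigma2 => x y; rewrite gram_form_mul exprMn -mulrA.
apply: le_trans (sigma2_sqr_le_gram _ _ _).
by rewrite ler_wpM2l ?sqr_ge0 // sigma2_sqr_le_gram.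
Qed.

Lemma sigma2_exp_ge C n : 1 <= sigma2 C -> sigma2 C <= sigma2 (C ^+ n.+1).
Proof.
move=> C_ge1; elim: n => [|n IH]; first by rewrite expr1.
rewrite exprSr -mulmxE; apply: le_trans (sigma2_mul_le _ _); nra.
Qed.

Lemma sigma2_orthogonal_mul U B : U^T *m U = 1%:M -> sigma2 (U *m B) = sigma2 B.
Proof. by move=> UU; rewrite /sigma2 trmx_mul -mulmxA (mulmxA U^T) UU mul1mx. Qed.

End SmallerSingularValue.

Section TentDerivatives.
Variable R : rcfType.
Implicit Types (a : R) (M : 'M[R]_2).

Definition reflect_mx : 'M[R]_2 := \matrix_(i, j) ((-1) ^+ i *+ (i == j)).

Lemma reflect_mx_orthogonal : reflect_mx^T *m reflect_mx = 1%:M.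
Proof.
apply/matrixP => i j; rewrite !mxE sum_ord2 !mxE.
by case: i => [[|[|i]] ?] //; case: j => [[|[|j]] ?] //=; ring.
Qed.

Lemma D2_reflect a : D2 a = reflect_mx *m D1 a.
Proof.
apply/matrixP => i j; rewrite !mxE sum_ord2 !mxE.
by case: i => [[|[|i]] ?] //; case: j => [[|[|j]] ?] //=; ring.
Qed.

Lemma sigma2_D1_mul a M : sigma2 (D1 a *m M) = sigma2 (D2 a *m M).
Proof. by rewrite D2_reflect -mulmxA [RHS]sigma2_orthogonal_mul ?reflect_mx_orthogonal. Qed.

Lemma sigma2_D2_cube_gt1 a : 0 < a -> a < 1 / 2 -> 1 < sigma2 (D2 a *m D2 a *m D2 a).
Proof.
move=> a_gt0 a_lt_half; apply: sigma2_gt1; rewrite lambda_min_gram.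
set u := 1 - 2 * a.
have u_gt0 : 0 < u by rewrite /u; lra.
have u_lt1 : u < 1 by rewrite /u; lra.
set B := D2 a *m D2 a *m D2 a.
have -> : B 0 0 = (1 - u) * (1 + u) by rewrite /B !(mxE, sum_ord2) /= /u; ring.
have -> : B 0 1 = (1 - u) ^+ 2 - (1 + u) by rewrite /B !(mxE, sum_ord2) /= /u; ring.
have -> : B 1 0 = - ((1 + u) * ((1 - u) ^+ 2 - (1 + u))).
  by rewrite /B !(mxE, sum_ord2) /= /u; ring.
have -> : B 1 1 = 2 * (1 - u) * (1 + u) - (1 - u) ^+ 3.
  by rewrite /B !(mxE, sum_ord2) /= /u; ring.
have u2_lt1 : u ^+ 2 < 1 by rewrite expr_lt1 // ltW.
have u3_lt1 : u ^+ 3 < 1 by rewrite expr_lt1 // ltW.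
have u4_gt0 : 0 < u ^+ 4 by rewrite exprn_gt0.
apply: lt_eig_min; rewrite -subr_gt0.
- match goal with |- is_true (0 < ?X) =>
    have -> : X = u ^+ 2 * (7 + 12 * u - u ^+ 2 - 4 * u ^+ 3 + u ^+ 4) by ring end.
  by rewrite mulr_gt0 ?exprn_gt0 //; lra.
- match goal with |- is_true (0 < ?X) =>
    have -> : X = u ^+ 3 * (42 - 16 * u + 20 * u ^+ 2 - u ^+ 3) by ring end.
  by rewrite mulr_gt0 ?exprn_gt0 //; nra.
Qed.

End TentDerivatives.

Theorem proposition6 (R : rcfType) (a : R) (ha0 : 0 < a) (ha1 : a < 1 / 2) :
  (forall M : 'M[R]_2, sigma2 (D1 a *m M) = sigma2 (D2 a *m M)) /\
  sigma2 (D1 a *m D2 a *m D2 a) = sigma2 (D2 a *m D2 a *m D2 a) /\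
  1 < sigma2 (D2 a *m D2 a *m D2 a) /\
  (forall k : nat, (1 <= k)%N ->
     sigma2 (D2 a *m D2 a *m D2 a) <= sigma2 (D1 a *m D2 a ^+ (2 + 3 * k)) /\
     1 < sigma2 (D2 a *m D2 a *m D2 a)).
Proof.
have cube_gt1 := sigma2_D2_cube_gt1 ha0 ha1.
have D2_cube : D2 a *m D2 a *m D2 a = D2 a ^+ 3 by rewrite !mulmxE -expr2 -exprSr.
split; first exact: sigma2_D1_mul.
split; first by rewrite -!mulmxA sigma2_D1_mul.
split=> // k _; split=> //.
rewrite D2_cube sigma2_D1_mul mulmxE -exprS.
have -> : (2 + 3 * k).+1 = (3 * k.+1)%N by lia.
by rewrite exprM sigma2_exp_ge // -D2_cube ltW.
Qed.
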